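(* Let $b>0$, let $f:[-b,b]\to\mathbb{R}$ be an odd function whose restriction to $[0,b]$ is convex, and let $p:[-b,b]\to[0,\infty)$ be a nondecreasing function that does not vanish on $(-b/3,b]$. Then for every $a\in[-b/3,b)$, \[ f\left(\frac{1}{\int_a^b p(x)\,dx}\int_a^b x\,p(x)\,dx\right)\le\frac{1}{\int_a^b p(x)\,dx}\int_a^b f(x)\,p(x)\,dx. \] *)

From Stdlib Require Import Reals Lra.
From Coquelicot Require Import Coquelicot.
Open Scope R_scope.

Definition odd_on (b : R) (f : R -> R) : Prop :=
  forall x, -b <= x <= b -> f (- x) = - f x.

Definition convex_on (l u : R) (f : R -> R) : Prop :=
  forall x y t, l <= x <= u -> l <= y <= u -> 0 <= t <= 1 ->
    f (t * x + (1 - t) * y) <= t * f x + (1 - t) * f y.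

Definition nondecr_on (l u : R) (p : R -> R) : Prop :=
  forall x y, l <= x <= u -> l <= y <= u -> x <= y -> p x <= p y.

From Stdlib Require Import Reals Lra.
From Coquelicot Require Import Coquelicot.
Open Scope R_scope.

(* Write P = ∫ p and m = (∫ x p) / P for the barycenter. Since p is nondecreasing and
   positive on (|a|, b], the barycenter lies in (0, b), where f has a supporting line
   ℓ(x) = f m + c (x - m); oddness gives f 0 = 0, hence ℓ(0) <= 0. The integral
   ∫ (f - ℓ) p is nonnegative: on [|a|, b] the integrand is, and on [a, |a|] the points
   y and -y pair off, f (-y) = - f y and p (-y) <= p y making each pair's contribution
   nonnegative. As ∫ ℓ p = f m * P, this is the claim. Every integrand is Riemann
   integrable because p is monotone and f - ℓ decreases up to m and increases after. *)

(** * Riemann integrals of real functions *)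

(* Coquelicot states these for an arbitrary normed module; the specialisations to [R]
   rewrite and apply on goals written with [+], [-] and [*]. *)
Lemma RInt_plusR (f g : R -> R) a b : ex_RInt f a b -> ex_RInt g a b ->
  RInt (fun x => f x + g x) a b = RInt f a b + RInt g a b.
Proof. now apply (RInt_plus (V := R_CompleteNormedModule)). Qed.

Lemma RInt_minusR (f g : R -> R) a b : ex_RInt f a b -> ex_RInt g a b ->
  RInt (fun x => f x - g x) a b = RInt f a b - RInt g a b.
Proof. now apply (RInt_minus (V := R_CompleteNormedModule)). Qed.

Lemma RInt_scalR (f : R -> R) k a b : ex_RInt f a b ->
  RInt (fun x => k * f x) a b = k * RInt f a b.
Proof. now apply (RInt_scal (V := R_CompleteNormedModule)). Qed.

Lemma RInt_constR (c a b : R) : RInt (fun _ => c) a b = c * (b - a).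
Proof. rewrite RInt_const. apply Rmult_comm. Qed.

Lemma RInt_ChaslesR (f : R -> R) a b c : ex_RInt f a b -> ex_RInt f b c ->
  RInt f a b + RInt f b c = RInt f a c.
Proof. now apply (RInt_Chasles (V := R_CompleteNormedModule)). Qed.

Lemma ex_RInt_plusR (f g : R -> R) a b : ex_RInt f a b -> ex_RInt g a b ->
  ex_RInt (fun x => f x + g x) a b.
Proof. now apply (ex_RInt_plus (V := R_NormedModule)). Qed.

Lemma ex_RInt_minusR (f g : R -> R) a b : ex_RInt f a b -> ex_RInt g a b ->
  ex_RInt (fun x => f x - g x) a b.
Proof. now apply (ex_RInt_minus (V := R_NormedModule)). Qed.

Lemma ex_RInt_scalR (f : R -> R) k a b : ex_RInt f a b -> ex_RInt (fun x => k * f x) a b.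
Proof. now apply (ex_RInt_scal (V := R_NormedModule)). Qed.

Lemma ex_RInt_subinterval (f : R -> R) a b u v : a <= u <= v -> v <= b -> ex_RInt f a b ->
  ex_RInt f u v.
Proof.
  intros hu hv h.
  apply (ex_RInt_Chasles_2 (V := R_CompleteNormedModule)) with a; [lra|].
  apply (ex_RInt_Chasles_1 (V := R_CompleteNormedModule)) with b; [lra|exact h].
Qed.

Lemma ex_RInt_ext_le (f g : R -> R) a b : a <= b -> (forall x, a < x < b -> f x = g x) ->
  ex_RInt f a b -> ex_RInt g a b.
Proof. intros hab H. apply ex_RInt_ext. rewrite Rmin_left, Rmax_right by lra. exact H. Qed.

Lemma RInt_ext_le (f g : R -> R) a b : a <= b -> (forall x, a < x < b -> f x = g x) ->
  RInt f a b = RInt g a b.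
Proof. intros hab H. apply RInt_ext. rewrite Rmin_left, Rmax_right by lra. exact H. Qed.

Lemma Riemann_sum_near (g : R -> R) a b l : a < b -> is_RInt g a b l ->
  forall eps : posreal, Riemann_fine a b (fun ptd => Rabs (Riemann_sum g ptd - l) < eps).
Proof.
  intros hab hg eps.
  apply (filter_imp (fun ptd => ball l eps (scal (sign (b - a)) (Riemann_sum g ptd)))).
  - intros ptd h. rewrite sign_eq_1 in h by lra.
    change (scal 1 ?x) with (1 * x) in h. rewrite Rmult_1_l in h. exact h.
  - exact (proj1 (filterlim_locally _ _) hg eps).
Qed.

(** * Integrability of monotone functions *)

(* Darboux's criterion: Riemann sums of [f] are squeezed between those of [g1] and
   [g2], so they form a Cauchy filter. *)
Lemma ex_RInt_squeeze (f : R -> R) a b : a < b ->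
  (forall eps, 0 < eps -> exists g1 g2 : R -> R, ex_RInt g1 a b /\ ex_RInt g2 a b /\
     (forall x, a <= x <= b -> g1 x <= f x <= g2 x) /\
     RInt g2 a b - RInt g1 a b < eps) ->
  ex_RInt f a b.
Proof.
  intros hab H.
  set (F := filtermap (Riemann_sum f) (Riemann_fine a b)).
  assert (F_proper : ProperFilter F).
  { apply filtermap_proper_filter, Riemann_fine_filter. }
  assert (fine_subdiv : Riemann_fine a b (fun ptd => pointed_subdiv ptd /\
     SF_h ptd = a /\ seq.last (SF_h ptd) (SF_lx ptd) = b)).
  { exists (mkposreal 1 Rlt_0_1). intros ptd _ (hp & hh & hl).
    rewrite Rmin_left in hh by lra. rewrite Rmax_right in hl by lra. auto. }
  assert (F_cauchy : cauchy F).
  { intros eps.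
    assert (heps : 0 < eps / 3) by (destruct eps; simpl; lra).
    destruct (H _ heps) as (g1 & g2 & i1 & i2 & hg & hgap).
    exists (RInt g1 a b).
    pose proof (Riemann_sum_near g1 a b _ hab (RInt_correct _ _ _ i1) (mkposreal _ heps)) as n1.
    pose proof (Riemann_sum_near g2 a b _ hab (RInt_correct _ _ _ i2) (mkposreal _ heps)) as n2.
    unfold F, filtermap.
    generalize (filter_and _ _ fine_subdiv (filter_and _ _ n1 n2)).
    apply filter_imp. intros ptd ((hp & hh & hl) & b1 & b2). simpl in b1, b2.
    assert (Riemann_sum g1 ptd <= Riemann_sum f ptd <= Riemann_sum g2 ptd).
    { split; apply Riemann_sum_le; auto; rewrite hl, hh; intros t ht; apply hg, ht. }
    apply Rabs_def2 in b1. apply Rabs_def2 in b2.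
    change (Rabs (Riemann_sum f ptd - RInt g1 a b) < eps).
    pose proof (cond_pos eps). apply Rabs_def1; lra. }
  exists (lim F). apply filterlim_locally. intros eps.
  eapply filter_imp; [|exact (complete_cauchy F F_proper F_cauchy eps)].
  intros ptd h. rewrite sign_eq_1 by lra.
  change (scal 1 ?x) with (1 * x). rewrite Rmult_1_l. exact h.
Qed.

Definition nonincr_on (l u : R) (p : R -> R) : Prop :=
  forall x y, l <= x <= u -> l <= y <= u -> x <= y -> p y <= p x.

Lemma nondecr_on_sub (p : R -> R) l u l' u' : l <= l' -> u' <= u ->
  nondecr_on l u p -> nondecr_on l' u' p.
Proof. intros hl hu hp x y hx hy. apply hp; lra. Qed.

Definition const_then (c v : R) (g : R -> R) (x : R) : R :=
  if Rle_dec x c then v else g x.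

Lemma RInt_const_then (g : R -> R) v a c b : a <= c <= b -> ex_RInt g c b ->
  ex_RInt (const_then c v g) a b /\
  RInt (const_then c v g) a b = v * (c - a) + RInt g c b.
Proof.
  intros hc hg.
  set (h := const_then c v g).
  assert (left_const : forall x, a < x < c -> v = h x).
  { intros x hx. unfold h, const_then. destruct (Rle_dec x c); [reflexivity|lra]. }
  assert (right_g : forall x, c < x < b -> g x = h x).
  { intros x hx. unfold h, const_then. destruct (Rle_dec x c); [lra|reflexivity]. }
  assert (ia : ex_RInt h a c).
  { apply (ex_RInt_ext_le (fun _ => v)); [lra|exact left_const|apply ex_RInt_const]. }
  assert (ib : ex_RInt h c b) by (apply (ex_RInt_ext_le g); [lra|exact right_g|exact hg]).
  split; [apply ex_RInt_Chasles with c; assumption|].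
  rewrite <- (RInt_ChaslesR h a c b ia ib).
  rewrite <- (RInt_ext_le (fun _ => v) h a c), <- (RInt_ext_le g h c b), RInt_constR;
    [reflexivity|lra|exact right_g|lra|exact left_const].
Qed.

(* Induction on the number [n] of steps of width [d]: on [[a, a + d]] bracket [f] by
   the constants [f a] and [f (a + d)], and recurse on [[a + d, b]]. *)
Lemma nondecr_step_bracket (n : nat) : forall (f : R -> R) a b d, 0 < d -> a <= b ->
  b - a <= INR n * d -> nondecr_on a b f ->
  exists g1 g2 : R -> R, ex_RInt g1 a b /\ ex_RInt g2 a b /\
    (forall x, a <= x <= b -> g1 x <= f x <= g2 x) /\
    RInt g2 a b - RInt g1 a b <= d * (f b - f a).
Proof.
  induction n as [|n IHn]; intros f a b d hd hab hn hf.
  - simpl in hn. assert (b = a) by lra. subst b.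
    exists f, f. rewrite RInt_point.
    repeat split; try apply ex_RInt_point; lra.
  - assert (hfab : f a <= f b) by (apply hf; lra).
    destruct (Rle_dec (b - a) d) as [short|long].
    + exists (fun _ => f a), (fun _ => f b).
      rewrite !RInt_constR.
      repeat split; try apply ex_RInt_const; try (apply hf; lra). nra.
    + set (c := a + d).
      rewrite S_INR in hn.
      destruct (IHn f c b d hd ltac:(unfold c; lra) ltac:(unfold c; lra)
        (nondecr_on_sub f a b c b ltac:(unfold c; lra) ltac:(lra) hf))
        as (g1 & g2 & i1 & i2 & hg & hgap).
      destruct (RInt_const_then g1 (f a) a c b ltac:(unfold c; lra) i1) as [j1 e1].
      destruct (RInt_const_then g2 (f c) a c b ltac:(unfold c; lra) i2) as [j2 e2].
      eexists _, _. split; [exact j1|]. split; [exact j2|]. split.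
      * intros x hx. unfold const_then. destruct (Rle_dec x c).
        -- split; apply hf; unfold c in *; lra.
        -- apply hg; lra.
      * rewrite e1, e2. unfold c in *. lra.
Qed.

Lemma ex_RInt_nondecr (f : R -> R) a b : a <= b -> nondecr_on a b f -> ex_RInt f a b.
Proof.
  intros hab hf.
  destruct (Req_dec a b) as [<-|hne]; [apply ex_RInt_point|].
  assert (hfab : f a <= f b) by (apply hf; lra).
  apply ex_RInt_squeeze; [lra|]. intros eps heps.
  set (d := eps / (f b - f a + 1)).
  assert (hd : 0 < d) by (apply Rdiv_lt_0_compat; lra).
  destruct (INR_archimed d (b - a) hd) as [n hn].
  destruct (nondecr_step_bracket n f a b d hd hab ltac:(lra) hf)
    as (g1 & g2 & i1 & i2 & hg & hgap).
  exists g1, g2. repeat split; auto; try apply hg; auto.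
  assert (d * (f b - f a) < eps).
  { unfold d. apply (Rmult_lt_reg_r (f b - f a + 1)); [lra|].
    field_simplify; [nra|lra]. }
  lra.
Qed.

Lemma ex_RInt_mul_nondecr (phi p : R -> R) u v : u <= v ->
  (forall x, u <= x <= v -> 0 <= phi x) -> (forall x, u <= x <= v -> 0 <= p x) ->
  nondecr_on u v phi -> nondecr_on u v p -> ex_RInt (fun x => phi x * p x) u v.
Proof.
  intros huv phi0 p0 hphi hp. apply ex_RInt_nondecr; [exact huv|].
  intros x y hx hy hxy. apply Rmult_le_compat; auto.
Qed.

(* [phi * p = phi u * p - (phi u - phi) * p], a difference of two nondecreasing
   functions. *)
Lemma ex_RInt_mul_nonincr (phi p : R -> R) u v : u <= v ->
  (forall x, u <= x <= v -> 0 <= phi x) -> (forall x, u <= x <= v -> 0 <= p x) ->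
  nonincr_on u v phi -> nondecr_on u v p -> ex_RInt (fun x => phi x * p x) u v.
Proof.
  intros huv phi0 p0 hphi hp.
  assert (ip : ex_RInt (fun x => phi u * p x) u v).
  { apply ex_RInt_scalR, ex_RInt_nondecr; assumption. }
  assert (idef : ex_RInt (fun x => (phi u - phi x) * p x) u v).
  { apply ex_RInt_mul_nondecr; auto.
    - intros x hx. assert (phi x <= phi u) by (apply hphi; lra). lra.
    - intros x y hx hy hxy. assert (phi y <= phi x) by (apply hphi; lra). lra. }
  apply (ex_RInt_ext_le (fun x => phi u * p x - (phi u - phi x) * p x)); [lra| |].
  - intros; ring.
  - apply ex_RInt_minusR; assumption.
Qed.

Lemma ex_RInt_mul_valley (phi p : R -> R) u w v : u <= v ->
  (forall x, u <= x <= v -> 0 <= phi x) -> (forall x, u <= x <= v -> 0 <= p x) ->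
  (forall x y, u <= x -> x <= y -> y <= v -> y <= w -> phi y <= phi x) ->
  (forall x y, u <= x -> x <= y -> y <= v -> w <= x -> phi x <= phi y) ->
  nondecr_on u v p -> ex_RInt (fun x => phi x * p x) u v.
Proof.
  intros huv phi0 p0 hdec hinc hp.
  assert (piece : forall s t, u <= s <= t -> t <= v -> (t <= w \/ w <= s) ->
    ex_RInt (fun x => phi x * p x) s t).
  { intros s t hs ht [tw|ws].
    - apply ex_RInt_mul_nonincr; try (intros; apply phi0 || apply p0; lra).
      + lra.
      + intros x y hx hy hxy. apply hdec; lra.
      + apply (nondecr_on_sub p u v); [lra|lra|exact hp].
    - apply ex_RInt_mul_nondecr; try (intros; apply phi0 || apply p0; lra).
      + lra.
      + intros x y hx hy hxy. apply hinc; lra.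
      + apply (nondecr_on_sub p u v); [lra|lra|exact hp]. }
  destruct (Rle_dec w u); [apply piece; lra|].
  destruct (Rle_dec v w); [apply piece; lra|].
  apply ex_RInt_Chasles with w; apply piece; lra.
Qed.

Lemma ex_RInt_id_mul (p : R -> R) u v : u <= v ->
  (forall x, u <= x <= v -> 0 <= p x) -> nondecr_on u v p ->
  ex_RInt (fun x => x * p x) u v.
Proof.
  intros huv p0 hp.
  assert (i1 : ex_RInt (fun x => (x - u) * p x) u v).
  { apply ex_RInt_mul_nondecr; auto.
    - intros; lra.
    - intros x y _ _ ?; lra. }
  assert (i2 : ex_RInt (fun x => u * p x) u v).
  { apply ex_RInt_scalR, ex_RInt_nondecr; assumption. }
  apply (ex_RInt_ext_le (fun x => (x - u) * p x + u * p x)); [lra| |].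
  - intros; ring.
  - apply ex_RInt_plusR; assumption.
Qed.

(** * Lower bounds for integrals *)

Lemma RInt_reflect (k : R -> R) s t : ex_RInt k s t ->
  ex_RInt (fun y => k (- y)) (- t) (- s) /\
  RInt (fun y => k (- y)) (- t) (- s) = RInt k s t.
Proof.
  intros h.
  assert (hk : is_RInt k (- - s) (- - t) (RInt k s t)).
  { rewrite !Ropp_involutive. exact (RInt_correct _ _ _ h). }
  apply is_RInt_comp_opp, is_RInt_swap, is_RInt_opp in hk. rewrite opp_opp in hk.
  assert (hr : is_RInt (fun y => k (- y)) (- t) (- s) (RInt k s t)).
  { eapply is_RInt_ext; [|exact hk]. intros x _. apply Ropp_involutive. }
  split; [exists (RInt k s t); exact hr | exact (is_RInt_unique _ _ _ _ hr)].
Qed.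

Lemma RInt_ge_0_paired (k : R -> R) a : a <= 0 -> ex_RInt k a (- a) ->
  (forall y, 0 <= y <= - a -> 0 <= k y + k (- y)) -> 0 <= RInt k a (- a).
Proof.
  intros ha h hk.
  assert (i1 : ex_RInt k a 0) by (apply (ex_RInt_subinterval k a (- a)); [lra|lra|exact h]).
  assert (i2 : ex_RInt k 0 (- a)) by (apply (ex_RInt_subinterval k a (- a)); [lra|lra|exact h]).
  destruct (RInt_reflect k a 0 i1) as [i3 e3]. rewrite Ropp_0 in i3, e3.
  rewrite <- (RInt_ChaslesR k a 0 (- a) i1 i2), <- e3, <- RInt_plusR by assumption.
  apply RInt_ge_0; [lra|apply ex_RInt_plusR; assumption|].
  intros x hx. specialize (hk x ltac:(lra)). lra.
Qed.

Lemma RInt_ge_on_subinterval (k : R -> R) u v s t d : u <= s <= t -> t <= v ->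
  ex_RInt k u v -> (forall x, u <= x <= v -> 0 <= k x) ->
  (forall x, s <= x <= t -> d <= k x) -> d * (t - s) <= RInt k u v.
Proof.
  intros hst htv h k0 hd.
  assert (i1 : ex_RInt k u s) by (apply (ex_RInt_subinterval k u v); [lra|lra|exact h]).
  assert (i2 : ex_RInt k s t) by (apply (ex_RInt_subinterval k u v); [lra|lra|exact h]).
  assert (i3 : ex_RInt k t v) by (apply (ex_RInt_subinterval k u v); [lra|lra|exact h]).
  assert (i23 : ex_RInt k s v) by (apply ex_RInt_Chasles with t; assumption).
  rewrite <- (RInt_ChaslesR k u s v i1 i23), <- (RInt_ChaslesR k s t v i2 i3).
  assert (0 <= RInt k u s) by (apply RInt_ge_0; [lra|exact i1|intros; apply k0; lra]).
  assert (0 <= RInt k t v) by (apply RInt_ge_0; [lra|exact i3|intros; apply k0; lra]).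
  assert (RInt (fun _ => d) s t <= RInt k s t).
  { apply RInt_le; [lra|apply ex_RInt_const|exact i2|intros; apply hd; lra]. }
  rewrite RInt_constR in *. lra.
Qed.

Lemma RInt_paired_ge (k : R -> R) a b s t d : Rabs a <= s <= t -> t <= b ->
  ex_RInt k a b -> (forall y, 0 <= y <= - a -> 0 <= k y + k (- y)) ->
  (forall x, Rabs a <= x <= b -> 0 <= k x) -> (forall x, s <= x <= t -> d <= k x) ->
  d * (t - s) <= RInt k a b.
Proof.
  intros hs ht h hpair k0 hd.
  assert (ha : a <= Rabs a) by apply RRle_abs.
  assert (i1 : ex_RInt k a (Rabs a)) by (apply (ex_RInt_subinterval k a b); [lra|lra|exact h]).
  assert (i2 : ex_RInt k (Rabs a) b) by (apply (ex_RInt_subinterval k a b); [lra|lra|exact h]).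
  rewrite <- (RInt_ChaslesR k a (Rabs a) b i1 i2).
  assert (0 <= RInt k a (Rabs a)).
  { destruct (Rle_dec a 0) as [aneg|apos].
    - rewrite Rabs_left1 in * by exact aneg. apply RInt_ge_0_paired; assumption.
    - rewrite Rabs_right in * by lra. rewrite RInt_point. apply Rle_refl. }
  assert (d * (t - s) <= RInt k (Rabs a) b).
  { apply RInt_ge_on_subinterval; assumption || lra. }
  lra.
Qed.

(** * Convex functions *)

Lemma Rdiv_le_cross (x1 y1 x2 y2 : R) : 0 < y1 -> 0 < y2 -> x1 * y2 <= x2 * y1 ->
  x1 / y1 <= x2 / y2.
Proof.
  intros h1 h2 h. apply Rmult_le_reg_r with (y1 * y2); [nra|].
  replace (x1 / y1 * (y1 * y2)) with (x1 * y2) by (field; lra).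
  replace (x2 / y2 * (y1 * y2)) with (x2 * y1) by (field; lra). exact h.
Qed.

Lemma convex_three_slope (f : R -> R) l u x m y : convex_on l u f ->
  l <= x -> x < m -> m < y -> y <= u ->
  (f m - f x) * (y - m) <= (f y - f m) * (m - x).
Proof.
  intros hc hx hxm hmy hy.
  set (t := (y - m) / (y - x)).
  assert (ht : 0 <= t <= 1).
  { unfold t. split.
    - apply Rdiv_le_0_compat; lra.
    - apply Rmult_le_reg_r with (y - x); [lra|]. field_simplify; lra. }
  assert (hm : t * x + (1 - t) * y = m) by (unfold t; field; lra).
  pose proof (hc x y t ltac:(lra) ltac:(lra) ht) as H. rewrite hm in H.
  assert (H' : (y - x) * f m <= (y - m) * f x + (m - x) * f y).
  { replace ((y - m) * f x + (m - x) * f y) with ((y - x) * (t * f x + (1 - t) * f y))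
      by (unfold t; field; lra).
    apply Rmult_le_compat_l; lra. }
  nra.
Qed.

(* The slope [c] is the supremum of the chord slopes to the left of [m]. *)
Lemma convex_supporting_line (f : R -> R) l u m : convex_on l u f -> l < m < u ->
  exists c, forall x, l <= x <= u -> f m + c * (x - m) <= f x.
Proof.
  intros hc hm.
  set (E := fun s => exists x, l <= x < m /\ s = (f m - f x) / (m - x)).
  assert (E_bound : bound E).
  { exists ((f u - f m) / (u - m)). intros s (x & hx & ->).
    apply Rdiv_le_cross; try lra. apply (convex_three_slope f l u); auto; lra. }
  assert (E_inhabited : exists s, E s) by (exists ((f m - f l) / (m - l)), l; split; [lra|auto]).
  destruct (completeness E E_bound E_inhabited) as [c [c_ub c_lub]].
  exists c. intros x hx.
  destruct (Rtotal_order x m) as [hlt|[->|hgt]].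
  - assert (hs : (f m - f x) / (m - x) <= c) by (apply c_ub; exists x; split; [lra|auto]).
    assert (e : f m - f x = (f m - f x) / (m - x) * (m - x)) by (field; lra).
    assert ((f m - f x) / (m - x) * (m - x) <= c * (m - x)) by (apply Rmult_le_compat_r; lra).
    nra.
  - lra.
  - assert (hs : c <= (f x - f m) / (x - m)).
    { apply c_lub. intros s (z & hz & ->). apply Rdiv_le_cross; try lra.
      apply (convex_three_slope f l u); auto; lra. }
    assert (e : f x - f m = (f x - f m) / (x - m) * (x - m)) by (field; lra).
    assert (c * (x - m) <= (f x - f m) / (x - m) * (x - m)) by (apply Rmult_le_compat_r; lra).
    nra.
Qed.

Lemma convex_valley (g : R -> R) l u m : convex_on l u g -> l <= m <= u ->
  (forall x, l <= x <= u -> 0 <= g x) -> g m = 0 ->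
  (forall x y, l <= x -> x <= y -> y <= u -> y <= m -> g y <= g x) /\
  (forall x y, l <= x -> x <= y -> y <= u -> m <= x -> g x <= g y).
Proof.
  intros hc hm g0 gm. split.
  - intros x y hx hxy hy hym. destruct (Req_dec x m) as [->|hxm].
    { replace y with m by lra. lra. }
    set (t := (m - y) / (m - x)).
    assert (ht : 0 <= t <= 1).
    { unfold t. split; [apply Rdiv_le_0_compat; lra|].
      apply Rmult_le_reg_r with (m - x); [lra|]. field_simplify; lra. }
    assert (e : t * x + (1 - t) * m = y) by (unfold t; field; lra).
    pose proof (hc x m t ltac:(lra) ltac:(lra) ht) as H. rewrite e, gm in H.
    assert (0 <= g x) by (apply g0; lra). nra.
  - intros x y hx hxy hy hmx. destruct (Req_dec y m) as [->|hym].
    { replace x with m by lra. lra. }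
    set (t := (y - x) / (y - m)).
    assert (ht : 0 <= t <= 1).
    { unfold t. split; [apply Rdiv_le_0_compat; lra|].
      apply Rmult_le_reg_r with (y - m); [lra|]. field_simplify; lra. }
    assert (e : t * m + (1 - t) * y = x) by (unfold t; field; lra).
    pose proof (hc m y t ltac:(lra) ltac:(lra) ht) as H. rewrite e, gm in H.
    assert (0 <= g y) by (apply g0; lra). nra.
Qed.

(** * The barycenter inequality *)

Section Barycenter.

Variables (a b : R) (p : R -> R).
Hypothesis a_abs_le : Rabs a <= b.
Hypothesis p_ge0 : forall x, a <= x <= b -> 0 <= p x.
Hypothesis p_nondecr : nondecr_on a b p.

Let a_range : - b <= a <= b.
Proof. now apply Rabs_le_between. Qed.

Let a_le_b : a <= b.
Proof. lra. Qed.

Let a_within_abs : - Rabs a <= a <= Rabs a.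
Proof. apply Rabs_le_between, Rle_refl. Qed.

Lemma ex_RInt_affine_mul (alpha beta u v : R) : a <= u <= v -> v <= b ->
  ex_RInt (fun x => alpha * p x + beta * (x * p x)) u v.
Proof.
  intros hu hv.
  assert (p_ge0' : forall x, u <= x <= v -> 0 <= p x) by (intros; apply p_ge0; lra).
  assert (p_nondecr' : nondecr_on u v p)
    by (apply (nondecr_on_sub p a b); [lra|lra|exact p_nondecr]).
  apply ex_RInt_plusR; apply ex_RInt_scalR.
  - apply ex_RInt_nondecr; [lra|exact p_nondecr'].
  - apply ex_RInt_id_mul; [lra|exact p_ge0'|exact p_nondecr'].
Qed.

Lemma ex_RInt_mass : ex_RInt p a b.
Proof. exact (ex_RInt_nondecr p a b a_le_b p_nondecr). Qed.

Lemma ex_RInt_moment : ex_RInt (fun x => x * p x) a b.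
Proof. exact (ex_RInt_id_mul p a b a_le_b p_ge0 p_nondecr). Qed.

Section Positivity.

Variable s : R.
Hypothesis s_range : Rabs a < s < b.
Hypothesis p_s_pos : 0 < p s.

Let s_bounds : - s < a < s.
Proof. destruct (Rabs_def2 a s (proj1 s_range)). lra. Qed.

Lemma RInt_mass_pos : 0 < RInt p a b.
Proof.
  assert (p s * (b - s) <= RInt p a b).
  { apply RInt_ge_on_subinterval; try lra; [exact ex_RInt_mass|exact p_ge0|].
    intros x hx. apply p_nondecr; lra. }
  nra.
Qed.

Lemma RInt_moment_pos : 0 < RInt (fun x => x * p x) a b.
Proof.
  assert (s * p s * (b - s) <= RInt (fun x => x * p x) a b).
  { apply RInt_paired_ge; try lra; [exact ex_RInt_moment| | |].
    - intros y hy.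
      assert (p (- y) <= p y) by (apply p_nondecr; lra).
      replace (y * p y + - y * p (- y)) with (y * (p y - p (- y))) by ring.
      apply Rmult_le_pos; lra.
    - intros x hx. apply Rmult_le_pos; [lra|apply p_ge0; lra].
    - intros x hx. assert (p s <= p x) by (apply p_nondecr; lra).
      apply Rmult_le_compat; lra. }
  assert (0 < s * p s * (b - s)).
  { apply Rmult_lt_0_compat; [apply Rmult_lt_0_compat|]; lra. }
  lra.
Qed.

Lemma RInt_moment_lt : RInt (fun x => x * p x) a b < b * RInt p a b.
Proof.
  set (t := (s + b) / 2).
  assert (ik : ex_RInt (fun x => b * p x - x * p x) a b).
  { apply ex_RInt_minusR; [apply ex_RInt_scalR, ex_RInt_mass|exact ex_RInt_moment]. }
  assert (lower : (b - t) * p s * (t - s) <= RInt (fun x => b * p x - x * p x) a b).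
  { apply RInt_ge_on_subinterval; unfold t; try lra; [exact ik| |].
    - intros x hx. assert (0 <= p x) by (apply p_ge0; lra). nra.
    - intros x hx. assert (p s <= p x) by (apply p_nondecr; lra).
      replace (b * p x - x * p x) with ((b - x) * p x) by ring.
      apply Rmult_le_compat; lra. }
  rewrite RInt_minusR, RInt_scalR in lower;
    [|exact ex_RInt_mass|apply ex_RInt_scalR, ex_RInt_mass|exact ex_RInt_moment].
  assert (0 < (b - t) * p s * (t - s)).
  { unfold t. apply Rmult_lt_0_compat; [apply Rmult_lt_0_compat|]; lra. }
  lra.
Qed.

End Positivity.

Section SupportingLine.

Variables (f : R -> R) (m c : R).
Hypothesis f_odd : odd_on b f.
Hypothesis f_convex : convex_on 0 b f.
Hypothesis m_range : 0 <= m <= b.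
Hypothesis f_above_line : forall x, 0 <= x <= b -> f m + c * (x - m) <= f x.

Let gap x := f x - (f m + c * (x - m)).

Let gap_ge0 x : 0 <= x <= b -> 0 <= gap x.
Proof. intros hx. specialize (f_above_line x hx). unfold gap. lra. Qed.

Let gap_valley :
  (forall x y, 0 <= x -> x <= y -> y <= b -> y <= m -> gap y <= gap x) /\
  (forall x y, 0 <= x -> x <= y -> y <= b -> m <= x -> gap x <= gap y).
Proof.
  apply convex_valley; [|lra|exact gap_ge0|unfold gap; ring].
  intros x y t hx hy ht. pose proof (f_convex x y t hx hy ht). unfold gap. nra.
Qed.

Let line_at_0 := f m - c * m.

Let line_at_0_le0 : line_at_0 <= 0.
Proof.
  assert (f 0 = 0) by (pose proof (f_odd 0 ltac:(lra)) as h; rewrite Ropp_0 in h; lra).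
  specialize (f_above_line 0 ltac:(lra)). unfold line_at_0. lra.
Qed.

Lemma ex_RInt_odd_mul : ex_RInt (fun x => f x * p x) a b.
Proof.
  destruct gap_valley as [gap_dec gap_inc].
  assert (right : forall u, a <= u -> 0 <= u -> u <= b ->
    ex_RInt (fun x => f x * p x) u b).
  { intros u hau hu hub.
    apply (ex_RInt_ext_le (fun x => gap x * p x + (line_at_0 * p x + c * (x * p x))));
      [lra|intros; unfold gap, line_at_0; ring|].
    apply ex_RInt_plusR; [|apply ex_RInt_affine_mul; lra].
    apply (ex_RInt_mul_valley _ _ u m b); try (intros; apply gap_ge0 || apply p_ge0; lra).
    - lra.
    - intros x y hx hxy hy hym. apply gap_dec; lra.
    - intros x y hx hxy hy hmx. apply gap_inc; lra.
    - apply (nondecr_on_sub p a b); [lra|lra|exact p_nondecr]. }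
  destruct (Rle_dec 0 a) as [a_nonneg|a_neg]; [apply right; lra|].
  apply ex_RInt_Chasles with 0; [|apply right; lra].
  apply (ex_RInt_ext_le
    (fun x => -1 * (gap (- x) * p x) + (- line_at_0 * p x + c * (x * p x)))); [lra| |].
  - intros x hx. rewrite <- (Ropp_involutive (f x)), <- f_odd by lra.
    unfold gap, line_at_0. ring.
  - apply ex_RInt_plusR; [apply ex_RInt_scalR|apply ex_RInt_affine_mul; lra].
    apply (ex_RInt_mul_valley _ _ a (- m) 0);
      try (intros; apply gap_ge0 || apply p_ge0; lra).
    + lra.
    + intros x y hx hxy hy hym. apply gap_inc; lra.
    + intros x y hx hxy hy hmx. apply gap_dec; lra.
    + apply (nondecr_on_sub p a b); [lra|lra|exact p_nondecr].
Qed.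

Lemma RInt_odd_mul_ge :
  line_at_0 * RInt p a b + c * RInt (fun x => x * p x) a b <= RInt (fun x => f x * p x) a b.
Proof.
  set (k := fun x => f x * p x - (line_at_0 * p x + c * (x * p x))).
  assert (ik : ex_RInt k a b).
  { apply ex_RInt_minusR; [exact ex_RInt_odd_mul|apply ex_RInt_affine_mul; lra]. }
  assert (Ik : RInt k a b = RInt (fun x => f x * p x) a b
                 - (line_at_0 * RInt p a b + c * RInt (fun x => x * p x) a b)).
  { pose proof ex_RInt_mass as ip. pose proof ex_RInt_moment as ixp.
    assert (ia : ex_RInt (fun x => line_at_0 * p x + c * (x * p x)) a b)
      by (apply ex_RInt_affine_mul; lra).
    unfold k. rewrite (RInt_minusR _ _ a b ex_RInt_odd_mul ia).
    rewrite (RInt_plusR _ _ a b (ex_RInt_scalR _ line_at_0 a b ip)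
               (ex_RInt_scalR _ c a b ixp)).
    rewrite (RInt_scalR _ line_at_0 a b ip), (RInt_scalR _ c a b ixp). reflexivity. }
  assert (k_gap : forall x, k x = gap x * p x) by (intros; unfold k, gap, line_at_0; ring).
  assert (k_nonneg : forall x, Rabs a <= x <= b -> 0 <= k x).
  { intros x hx. pose proof (Rabs_pos a).
    rewrite k_gap. apply Rmult_le_pos; [apply gap_ge0|apply p_ge0]; lra. }
  assert (0 * (b - b) <= RInt k a b).
  { apply RInt_paired_ge; [lra|lra|exact ik| | |intros; apply k_nonneg; lra].
    - intros y hy.
      assert (p (- y) <= p y) by (apply p_nondecr; lra).
      assert (0 <= p (- y)) by (apply p_ge0; lra).
      assert (0 <= gap y) by (apply gap_ge0; lra).
      assert (pair : k y + k (- y) = gap y * (p y - p (- y)) - 2 * line_at_0 * p (- y)).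
      { unfold k. rewrite f_odd by lra. unfold gap, line_at_0. ring. }
      rewrite pair.
      assert (0 <= gap y * (p y - p (- y))) by (apply Rmult_le_pos; lra).
      assert (0 <= - line_at_0 * p (- y))
        by (apply Rmult_le_pos; pose proof line_at_0_le0; lra).
      lra.
    - exact k_nonneg. }
  lra.
Qed.

End SupportingLine.

End Barycenter.

Theorem corollary1 (b : R) (f p : R -> R) :
  0 < b ->
  odd_on b f ->
  convex_on 0 b f ->
  (forall x, -b <= x <= b -> 0 <= p x) ->
  nondecr_on (-b) b p ->
  (forall x, -b/3 < x <= b -> p x <> 0) ->
  forall a, -b/3 <= a < b ->
    f (RInt (fun x => x * p x) a b / RInt p a b)
    <= RInt (fun x => f x * p x) a b / RInt p a b.
Proof.
  intros hb f_odd f_convex p_ge0 p_nondecr p_nonzero a ha.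
  assert (a_abs : Rabs a < b) by (apply Rabs_def1; lra).
  assert (p_ge0' : forall x, a <= x <= b -> 0 <= p x) by (intros; apply p_ge0; lra).
  assert (p_nondecr' : nondecr_on a b p)
    by (apply (nondecr_on_sub p (- b) b); [lra|lra|exact p_nondecr]).
  set (s := (Rabs a + b) / 2).
  assert (s_range : Rabs a < s < b) by (unfold s; lra).
  assert (p_s_pos : 0 < p s).
  { pose proof (Rabs_pos a). assert (p s <> 0) by (apply p_nonzero; lra).
    assert (0 <= p s) by (apply p_ge0; lra). lra. }
  assert (a_abs_le : Rabs a <= b) by lra.
  pose proof (RInt_mass_pos a b p a_abs_le p_ge0' p_nondecr' s s_range p_s_pos) as P_pos.
  pose proof (RInt_moment_pos a b p a_abs_le p_ge0' p_nondecr' s s_range p_s_pos) as X_pos.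
  pose proof (RInt_moment_lt a b p a_abs_le p_ge0' p_nondecr' s s_range p_s_pos) as X_lt.
  set (P := RInt p a b : R) in *. set (X := RInt (fun x => x * p x) a b : R) in *.
  set (m := X / P).
  assert (m_range : 0 < m < b).
  { unfold m. split; [apply Rdiv_lt_0_compat; lra|].
    apply Rmult_lt_reg_r with P; [lra|]. field_simplify; lra. }
  destruct (convex_supporting_line f 0 b m f_convex m_range) as [c f_above_line].
  pose proof (RInt_odd_mul_ge a b p a_abs_le p_ge0' p_nondecr' f m c
    f_odd f_convex ltac:(lra) f_above_line) as jensen.
  fold P X in jensen.
  replace ((f m - c * m) * P + c * X) with (f m * P) in jensen by (unfold m; field; lra).
  apply Rmult_le_reg_r with P; [lra|].
  unfold Rdiv. rewrite Rmult_assoc, Rinv_l, Rmult_1_r by lra. exact jensen.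
Qed.
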